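(* Let $A\in\mathbb{C}^{n\times n}$ be positive definite (i.e. $A+A^*$ is Hermitian positive definite), let $C\in\mathbb{C}^{m\times m}$ be positive semidefinite (i.e. $C+C^*$ is Hermitian positive semidefinite), let $B\in\mathbb{C}^{m\times n}$ with $m\le n$, and let $$\mathcal{A}=\begin{bmatrix}A&B^*\\-B&C\end{bmatrix}$$ be singular, with linear system $\mathcal{A}u=b$. Write $A=A_P+A_S$ with $A_P$ positive definite and $A_S$ skew-Hermitian, $C=C_P+C_S$ with $C_P$ positive semidefinite and $C_S$ skew-Hermitian, and $B=B_P+B_S$ an arbitrary splitting. Let $P_\alpha\in\mathbb{C}^{n\times n}$, $P_\beta\in\mathbb{C}^{m\times m}$ be Hermitian positive definite, set $$\mathcal{P}=\begin{bmatrix}A_P&B_P^*\\-B_P&C_P\end{bmatrix},\quad \mathcal{S}=\begin{bmatrix}A_S&B_S^*\\-B_S&C_S\end{bmatrix},\quad \Sigma=\begin{bmatrix}P_\alpha&0\\0&P_\beta\end{bmatrix},$$ and consider the EPSS iteration $u^{k+1}=\Gamma_{\mathrm{EPSS}}u^k+c$ with $\Gamma_{\mathrm{EPSS}}=(\Sigma+\mathcal{S})^{-1}(\Sigma-\mathcal{P})(\Sigma+\mathcal{P})^{-1}(\Sigma-\mathcal{S})$ and $c=2(\Sigma+\mathcal{S})^{-1}\Sigma(\Sigma+\mathcal{P})^{-1}b$. Suppose $\mathrm{null}(C+C^* )\subseteq\mathrm{null}(C)$ and that at least one of the following holds: (1) for all nonzero $r\in\mathrm{null}(C+C^* )$, $r^*(P_\beta+C_SP_\beta^{-1}C_S^*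 )r\neq r^*(B_SP_\alpha^{-1}B_P^* )r$; (2) every nonzero $r\in\mathrm{null}(C+C^* )$ satisfies $r^*(B_SP_\alpha^{-1}B_P^* )r\le 0$; (3) $\mathrm{null}(C+C^* )\subseteq\mathrm{null}(B_S^* )\cup\mathrm{null}(B_P^* )$; (4) $C$ is positive definite, or $B_S=0$, or $B_P=0$. Then the EPSS iteration is semi-convergent, i.e. it converges to a solution of $\mathcal{A}u=b$ for every initial guess $u^0$.
   Context: $\mathrm{null}(\cdot)$ denotes the null space. An iteration for a singular system is called semi-convergent if it converges to a solution of the system for any initial guess; the system $\mathcal{A}u=b$ is understood to be consistent (solvable). In condition (2), ''$\le 0$'' means the (complex) number is real and nonpositive. *)

From HB Require Import structures.
From mathcomp Require Import all_boot all_order all_algebra.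
From mathcomp Require Import all_classical all_reals all_analysis.
From mathcomp Require Import complex.
Set Implicit Arguments. Unset Strict Implicit. Unset Printing Implicit Defensive.
Import Order.TTheory GRing.Theory Num.Theory.
Import numFieldNormedType.Exports.
Local Open Scope ring_scope.
Local Open Scope complex_scope.
Local Open Scope classical_set_scope.

Section Defs.
Variable R : realType.
Local Notation C := R[i].
(* topology on C^N: the normed-module structure of 'cV[C^o]_N (C^o = C as
   a normed module over itself, max-norm on vectors) *)

Definition ctr m n (M : 'M[C]_(m, n)) : 'M[C]_(n, m) := (map_mx (fun z : C => z^*) M)^T.

Definition qform n (M : 'M[C]_n) (x : 'cV[C]_n) : C := (ctr x *m M *m x) 0 0.

Definition hermitian n (M : 'M[C]_n) := ctr M = M.
Definition skew_hermitian n (M : 'M[C]_n) := ctr M = - M.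

Definition hpd n (M : 'M[C]_n) :=
  hermitian M /\ forall x : 'cV[C]_n, x != 0 -> 0 < qform M x.
Definition hpsd n (M : 'M[C]_n) :=
  hermitian M /\ forall x : 'cV[C]_n, 0 <= qform M x.

Definition posdef n (M : 'M[C]_n) := hpd (M + ctr M).
Definition possemidef n (M : 'M[C]_n) := hpsd (M + ctr M).

Definition in_null m n (M : 'M[C]_(m, n)) (x : 'cV[C]_n) := M *m x = 0.

Definition iterate N (G : 'M[C]_N) (c u0 : 'cV[C]_N) (k : nat) : 'cV[C]_N :=
  iter k (fun u => G *m u + c) u0.

Definition semi_convergent N (G : 'M[C]_N) (c : 'cV[C]_N)
    (Acal : 'M[C]_N) (b : 'cV[C]_N) :=
  forall u0 : 'cV[C]_N, exists2 u : 'cV[C]_N,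
    ((iterate G c u0 k : 'cV[C^o]_N) @[k --> \oo] --> (u : 'cV[C^o]_N))
    & Acal *m u = b.

End Defs.

From Pilot Require Import Defs.
From HB Require Import structures.
From mathcomp Require Import all_boot all_order all_algebra.
From mathcomp Require Import all_classical all_reals all_analysis.
From mathcomp Require Import complex.
From mathcomp Require Import ring lra.
Import Order.TTheory GRing.Theory Num.Theory.
Import numFieldNormedType.Exports.
Local Open Scope ring_scope.
Set Implicit Arguments. Unset Strict Implicit. Unset Printing Implicit Defensive.

(** Let Gamma = (Sigma + S)^-1 (Sigma - P) (Sigma + P)^-1 (Sigma - S), with Sigma Hermitian
    positive definite, P positive semidefinite and S skew-Hermitian, and let
    v = (Sigma + P)^-1 (Sigma - S) x be the half step.  In the energy norm
    E(x) = ((Sigma + S) x)^* Sigma^-1 ((Sigma + S) x) one step loses exactly 4 Re (v^* P v).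
    Hence the powers of Gamma are bounded, so its eigenvalue 1 is semisimple, and every
    eigenvalue l <> 1 has |l| < 1 unless Re (v^* P v) = 0.  For the saddle point splitting
    the latter forces v = (0, r) with (C + C^* ) r = 0, hence C r = 0, and the second block
    row of the eigenvalue equations becomes (Pb + CS Pb^-1 CS^* ) r = BS Pa^-1 BP^* r,
    which each of the conditions (1)-(4) excludes.  A matrix whose eigenvalue 1 is
    semisimple and whose other eigenvalues lie in the open unit disc has powers converging
    to fixed points (factor the characteristic polynomial and use Cayley-Hamilton).  The
    fixed points of Gamma are the null vectors of P + S, which is the saddle point matrix,
    and c = (I - Gamma) u for any solution u, so the iterates converge to a solution. *)

(* Without these, [Re] would denote the ['Re] of number fields, which is valued in [R[i]]. *)
Local Notation Re := complex.Re.
Local Notation Im := complex.Im.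

Section ConjugateTranspose.
Variable R : realType.
Local Notation C := R[i].
Local Open Scope complex_scope.

Lemma ctrM m n p (X : 'M[C]_(m, n)) (Y : 'M[C]_(n, p)) :
  ctr (X *m Y) = ctr Y *m ctr X.
Proof. by rewrite /ctr map_mxM trmx_mul. Qed.

Lemma ctrD m n (X Y : 'M[C]_(m, n)) : ctr (X + Y) = ctr X + ctr Y.
Proof. by rewrite /ctr map_mxD linearD. Qed.

Lemma ctrN m n (X : 'M[C]_(m, n)) : ctr (- X) = - ctr X.
Proof. by rewrite /ctr map_mxN linearN. Qed.

Lemma ctrZ m n a (X : 'M[C]_(m, n)) : ctr (a *: X) = a^* *: ctr X.
Proof. by rewrite /ctr map_mxZ linearZ. Qed.

Lemma ctrK m n (X : 'M[C]_(m, n)) : ctr (ctr X) = X.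
Proof. by apply/matrixP=> i j; rewrite /ctr !mxE conjcK. Qed.

Lemma ctr0 m n : ctr (0 : 'M[C]_(m, n)) = 0.
Proof. by rewrite /ctr map_mx0 trmx0. Qed.

Lemma ctr_invmx n (X : 'M[C]_n) : ctr (invmx X) = invmx (ctr X).
Proof. by rewrite /ctr map_invmx trmx_inv. Qed.

Lemma ctr_block_mx m1 m2 n1 n2 (Xul : 'M[C]_(m1, n1)) (Xur : 'M[C]_(m1, n2))
    (Xdl : 'M[C]_(m2, n1)) (Xdr : 'M[C]_(m2, n2)) :
  ctr (block_mx Xul Xur Xdl Xdr) = block_mx (ctr Xul) (ctr Xdl) (ctr Xur) (ctr Xdr).
Proof. by rewrite /ctr map_block_mx tr_block_mx. Qed.

Lemma ctr_col_mx m1 m2 n (X1 : 'M[C]_(m1, n)) (X2 : 'M[C]_(m2, n)) :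
  ctr (col_mx X1 X2) = row_mx (ctr X1) (ctr X2).
Proof. by rewrite /ctr map_col_mx tr_col_mx. Qed.

Lemma skew_hermitianN n (X : 'M[C]_n) : skew_hermitian X -> skew_hermitian (- X).
Proof. by rewrite /skew_hermitian ctrN => ->. Qed.

End ConjugateTranspose.

Section QuadraticForms.
Variable R : realType.
Local Notation C := R[i].
Local Open Scope complex_scope.

Definition sesq m n (M : 'M[C]_(m, n)) (u : 'cV[C]_m) (v : 'cV[C]_n) : C :=
  (ctr u *m M *m v) 0 0.

Definition qformR n (M : 'M[C]_n) (x : 'cV[C]_n) : R := Re (qform M x).

Lemma qformE n (M : 'M[C]_n) x : qform M x = sesq M x x.
Proof. by []. Qed.

Lemma qformR0 n (M : 'M[C]_n) : qformR M 0 = 0.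
Proof. by rewrite /qformR /qform mulmx0 mxE. Qed.

Lemma sesq_conj m n (M : 'M[C]_(m, n)) u v : (sesq M u v)^* = sesq (ctr M) v u.
Proof.
have ctr11 (Y : 'M[C]_1) : (Y 0 0)^* = ctr Y 0 0 by rewrite /ctr !mxE.
by rewrite /sesq ctr11 !ctrM ctrK mulmxA.
Qed.

Lemma sesqDl m n (M : 'M[C]_(m, n)) u1 u2 v :
  sesq M (u1 + u2) v = sesq M u1 v + sesq M u2 v.
Proof. by rewrite /sesq ctrD !mulmxDl mxE. Qed.

Lemma sesqDr m n (M : 'M[C]_(m, n)) u v1 v2 :
  sesq M u (v1 + v2) = sesq M u v1 + sesq M u v2.
Proof. by rewrite /sesq !mulmxDr mxE. Qed.

Lemma sesqZl m n (M : 'M[C]_(m, n)) a u v : sesq M (a *: u) v = a^* * sesq M u v.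
Proof. by rewrite /sesq ctrZ -!scalemxAl mxE. Qed.

Lemma sesqZr m n (M : 'M[C]_(m, n)) a u v : sesq M u (a *: v) = a * sesq M u v.
Proof. by rewrite /sesq -!scalemxAr mxE. Qed.

Lemma sesq_delta n (M : 'M[C]_n) x i : sesq M (delta_mx i 0) x = (M *m x) i 0.
Proof.
rewrite /sesq.
have -> : ctr (delta_mx i 0 : 'cV[C]_n) = delta_mx 0 i.
  by apply/matrixP=> k l; rewrite /ctr !mxE conjc_nat andbC.
by rewrite -mulmxA -rowE mxE.
Qed.

Lemma qformR_ctr n (M : 'M[C]_n) x : qformR (ctr M) x = qformR M x.
Proof. by rewrite /qformR !qformE -sesq_conj; case: (sesq M x x). Qed.

Lemma qformRD n (M1 M2 : 'M[C]_n) x : qformR (M1 + M2) x = qformR M1 x + qformR M2 x.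
Proof. by rewrite /qformR /qform mulmxDr mulmxDl mxE raddfD. Qed.

Lemma qformR_mulmx m n (M : 'M[C]_m) (K : 'M[C]_(m, n)) x :
  qformR (ctr K *m M *m K) x = qformR M (K *m x).
Proof. by rewrite /qformR /qform ctrM !mulmxA. Qed.

Lemma qformRZ n (M : 'M[C]_n) a x :
  qformR M (a *: x) = (Re a ^+ 2 + Im a ^+ 2) * qformR M x.
Proof.
rewrite /qformR !qformE sesqZl sesqZr.
by case: a => a1 a2; case: (sesq M x x) => z1 z2 /=; ring.
Qed.

Lemma qformRZr n (M : 'M[C]_n) (a : R) x : qformR M (a%:C *: x) = a ^+ 2 * qformR M x.
Proof. by rewrite qformRZ /= expr0n addr0. Qed.

Lemma qformR_parallelogram n (M : 'M[C]_n) x y :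
  qformR M (x + y) + qformR M (x - y) = 2 * qformR M x + 2 * qformR M y.
Proof.
rewrite /qformR !qformE -scaleN1r !sesqDl !sesqDr !sesqZl !sesqZr.
by rewrite !raddfD /= rmorphN1 !mulN1r !raddfN /=; ring.
Qed.

Lemma qformRN n (M : 'M[C]_n) x : qformR (- M) x = - qformR M x.
Proof. by rewrite /qformR /qform mulmxN mulNmx mxE raddfN. Qed.

Lemma qformR_skew n (M : 'M[C]_n) x : skew_hermitian M -> qformR M x = 0.
Proof. by move=> hM; have := qformR_ctr M x; rewrite hM qformRN; lra. Qed.

Lemma qform_block_diag n1 n2 (M1 : 'M[C]_n1) (M2 : 'M[C]_n2) x1 x2 :
  qform (block_mx M1 0 0 M2) (col_mx x1 x2) = qform M1 x1 + qform M2 x2.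
Proof.
by rewrite /qform ctr_col_mx mul_row_block !mulmx0 addr0 add0r mul_row_col mxE.
Qed.

Lemma qformR_block_diag n1 n2 (M1 : 'M[C]_n1) (M2 : 'M[C]_n2) x1 x2 :
  qformR (block_mx M1 0 0 M2) (col_mx x1 x2) = qformR M1 x1 + qformR M2 x2.
Proof. by rewrite /qformR qform_block_diag raddfD. Qed.

Lemma qformR_gt0_unitmx n (M : 'M[C]_n) :
  (forall x, x != 0 -> 0 < qformR M x) -> M \in unitmx.
Proof.
move=> M_gt0; rewrite unitmxE unitfE -det_tr; apply/negP => /det0P[v v0 vM0].
have x0 : v^T != 0 by apply: contra v0 => /eqP e; rewrite -[v]trmxK e trmx0.
have Mx0 : M *m v^T = 0 by rewrite -[M]trmxK -trmx_mul vM0 trmx0.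
by have := M_gt0 _ x0; rewrite /qformR /qform -mulmxA Mx0 mulmx0 mxE ltxx.
Qed.

Lemma hpd_qformR_gt0 n (M : 'M[C]_n) x : hpd M -> x != 0 -> 0 < qformR M x.
Proof. by case=> _ M_gt0 /M_gt0; rewrite ltcE => /andP[]. Qed.

Lemma hpsd_qformR_ge0 n (M : 'M[C]_n) x : hpsd M -> 0 <= qformR M x.
Proof. by case=> _ /(_ x); rewrite lecE => /andP[]. Qed.

Lemma posdef_qformR_gt0 n (M : 'M[C]_n) x : posdef M -> x != 0 -> 0 < qformR M x.
Proof. by move=> /hpd_qformR_gt0 M_gt0 /M_gt0; rewrite qformRD qformR_ctr; lra. Qed.

Lemma possemidef_qformR_ge0 n (M : 'M[C]_n) x : possemidef M -> 0 <= qformR M x.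
Proof. by move=> /(hpsd_qformR_ge0 x); rewrite qformRD qformR_ctr; lra. Qed.

Lemma hpd_unitmx n (M : 'M[C]_n) : hpd M -> M \in unitmx.
Proof. by move=> hM; apply: qformR_gt0_unitmx => x; apply: hpd_qformR_gt0. Qed.

Lemma hpd_hpsd n (M : 'M[C]_n) : hpd M -> hpsd M.
Proof.
case=> hM M_gt0; split=> // x; have [->|/M_gt0/ltW //] := eqVneq x 0.
by rewrite /qform mulmx0 mxE.
Qed.

Lemma hpd_invmx n (M : 'M[C]_n) : hpd M -> hpd (invmx M).
Proof.
move=> hM; have uM := hpd_unitmx hM; have hMV : Defs.hermitian (invmx M).
  by rewrite /Defs.hermitian ctr_invmx hM.1.
split=> // x x0; have -> : qform (invmx M) x = qform M (invmx M *m x).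
  by rewrite /qform ctrM hMV -!mulmxA (mulKVmx uM).
by apply: hM.2; apply: contra x0 => /eqP y0; rewrite -(mulKVmx uM x) y0 mulmx0.
Qed.

Lemma hermitian_block_diag n1 n2 (M1 : 'M[C]_n1) (M2 : 'M[C]_n2) :
  Defs.hermitian M1 -> Defs.hermitian M2 -> Defs.hermitian (block_mx M1 0 0 M2).
Proof. by rewrite /Defs.hermitian ctr_block_mx !ctr0 => -> ->. Qed.

Lemma hpsd_block_diag n1 n2 (M1 : 'M[C]_n1) (M2 : 'M[C]_n2) :
  hpsd M1 -> hpsd M2 -> hpsd (block_mx M1 0 0 M2).
Proof.
move=> [h1 M1_ge0] [h2 M2_ge0]; split; first exact: hermitian_block_diag.
by move=> x; rewrite -(vsubmxK x) qform_block_diag addr_ge0.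
Qed.

Lemma hpd_block_diag n1 n2 (M1 : 'M[C]_n1) (M2 : 'M[C]_n2) :
  hpd M1 -> hpd M2 -> hpd (block_mx M1 0 0 M2).
Proof.
move=> hM1 hM2; split; first exact: hermitian_block_diag hM1.1 hM2.1.
have [_ M1_ge0] := hpd_hpsd hM1; have [_ M2_ge0] := hpd_hpsd hM2.
move=> x x0; have [x1_0|x1_neq0] := eqVneq (usubmx x) 0; last first.
  by rewrite -(vsubmxK x) qform_block_diag ltr_pwDl ?hM1.2.
have x2_0 : dsubmx x != 0.
  by apply: contra x0 => /eqP x2_0; rewrite -(vsubmxK x) x1_0 x2_0 col_mx0.
by rewrite -(vsubmxK x) qform_block_diag ltr_wpDl ?hM2.2.
Qed.

Lemma saddle_herm_part m n (A : 'M[C]_n) (B : 'M[C]_(m, n)) (D : 'M[C]_m) :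
  block_mx A (ctr B) (- B) D + ctr (block_mx A (ctr B) (- B) D) =
  block_mx (A + ctr A) 0 0 (D + ctr D).
Proof. by rewrite ctr_block_mx ctrK ctrN add_block_mx addrN addNr. Qed.

Lemma possemidef_saddle m n (A : 'M[C]_n) (B : 'M[C]_(m, n)) (D : 'M[C]_m) :
  posdef A -> possemidef D -> possemidef (block_mx A (ctr B) (- B) D).
Proof.
by move=> hA hD; rewrite /possemidef saddle_herm_part; apply: hpsd_block_diag (hpd_hpsd hA) hD.
Qed.

Lemma skew_hermitian_saddle m n (A : 'M[C]_n) (B : 'M[C]_(m, n)) (D : 'M[C]_m) :
  skew_hermitian A -> skew_hermitian D -> skew_hermitian (block_mx A (ctr B) (- B) D).
Proof. by rewrite /skew_hermitian ctr_block_mx ctrK ctrN opp_block_mx opprK => -> ->. Qed.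

Lemma qformR_saddle m n (A : 'M[C]_n) (B : 'M[C]_(m, n)) (D : 'M[C]_m) x1 x2 :
  qformR (block_mx A (ctr B) (- B) D) (col_mx x1 x2) = qformR A x1 + qformR D x2.
Proof.
have := qformRD (block_mx A (ctr B) (- B) D) (ctr (block_mx A (ctr B) (- B) D)) (col_mx x1 x2).
by rewrite saddle_herm_part qformR_block_diag !qformRD !qformR_ctr; lra.
Qed.

Lemma hermitian_psd_kernel n (M : 'M[C]_n) x :
  Defs.hermitian M -> (forall y, 0 <= qformR M y) -> qformR M x = 0 -> M *m x = 0.
Proof.
move=> hM M_ge0 Mx0.
(* [t |-> qformR M (x + t y)] is a nonnegative quadratic vanishing at [t = 0]. *)
have ReMx y : Re (sesq M y x) = 0.
  have expand (t : R) :
      qformR M (x + t%:C *: y) = 2 * t * Re (sesq M y x) + t ^+ 2 * qformR M y.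
    rewrite /qformR !qformE !sesqDl !sesqDr !sesqZl !sesqZr.
    have -> : sesq M x y = (sesq M y x)^* by rewrite sesq_conj hM.
    move: Mx0; rewrite /qformR qformE.
    by case: (sesq M x x) (sesq M y x) (sesq M y y) => [a b] [c d] [e f] /= ->; ring.
  set b := Re (sesq M y x); set g := qformR M y.
  have g_ge0 : 0 <= g := M_ge0 y.
  set s := (g + 1)^-1; have s_gt0 : 0 < s by rewrite invr_gt0; lra.
  have sg : s * (g + 1) = 1 by rewrite mulVf //; lra.
  have := M_ge0 (x + (- b * s)%:C *: y); rewrite expand -/b -/g => t_ge0.
  have : b ^+ 2 * s <= 0 by nra.
  by rewrite pmulr_lle0 // => b2_le0; apply/eqP; rewrite -sqrf_eq0 eq_le b2_le0 sqr_ge0.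
have sesqMx y : sesq M y x = 0.
  have := ReMx ('i *: y); rewrite sesqZl; have := ReMx y.
  by case: (sesq M y x) => a b /= -> /= h; apply/eqP; rewrite eq_complex /=; lra.
by apply/matrixP=> i j; rewrite ord1 -sesq_delta sesqMx mxE.
Qed.

Lemma skew_possemidef n (K : 'M[C]_n) : skew_hermitian K -> possemidef K.
Proof.
move=> hK; rewrite /possemidef hK subrr; split.
  by rewrite /Defs.hermitian ctr0.
by move=> x; rewrite /qform mulmx0 mul0mx mxE.
Qed.

Lemma hpd_add_unitmx n (Sg K : 'M[C]_n) : hpd Sg -> possemidef K -> Sg + K \in unitmx.
Proof.
move=> hSg hK; apply: qformR_gt0_unitmx => x x0; rewrite qformRD.
by apply: ltr_wpDr (possemidef_qformR_ge0 x hK) (hpd_qformR_gt0 hSg x0).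
Qed.

End QuadraticForms.

Section AffineRecursion.
Variable R : realType.
Local Notation C := R[i].
Local Open Scope classical_set_scope.
Local Open Scope complex_scope.

Lemma cvg0_perturbed_contraction (q : R) (x e : nat -> R) :
  0 <= q -> q < 1 -> (forall k, 0 <= x k) -> (forall k, x k.+1 <= q * x k + e k) ->
  e @ \oo --> 0 -> x @ \oo --> 0.
Proof.
move=> q_ge0 q_lt1 x_ge0 x_rec /cvgr0Pnorm_lt e_cvg; apply/cvgr0Pnorm_lt => d d_gt0.
have [K _ e_small] := e_cvg (d * (1 - q) / 2) ltac:(apply: divr_gt0 => //; nra).
have x_tail j : x (K + j)%N <= d / 2 + q ^+ j * x K.
  elim: j => [|j IH]; first by rewrite addn0 expr0 mul1r; have := x_ge0 K; lra.
  rewrite addnS; apply: le_trans (x_rec _) _.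
  have := e_small (K + j)%N (leq_addr _ _); rewrite /= ltr_norml => /andP[_ e_lt].
  have := ler_wpM2l q_ge0 IH; rewrite exprS; nra.
have q_norm_lt1 : `|q| < 1 by rewrite ger0_norm.
have [J _ qJ_small] := (cvgr0Pnorm_lt _).1 (cvg_expr q_norm_lt1) (d / (2 * (x K + 1)))
  ltac:(by apply: divr_gt0 => //; have := x_ge0 K; lra).
exists (K + J)%N => // k /= JKk; have Kk := leq_trans (leq_addr J K) JKk.
have := qJ_small (k - K)%N; rewrite /= leq_subRL // => /(_ JKk).
rewrite ger0_norm ?exprn_ge0 // ltr_pdivlMr; last by have := x_ge0 K; lra.
have := x_tail (k - K)%N; rewrite subnKC // ger0_norm //.
have := x_ge0 K; have : 0 <= q ^+ (k - K) by rewrite exprn_ge0.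
nra.
Qed.

Lemma Re_norm_ge0 (V : normedZmodType C) (v : V) : 0 <= Re `|v|.
Proof. by have := normr_ge0 v; rewrite lecE => /andP[]. Qed.

Lemma normr_Re (V : normedZmodType C) (v : V) : `|v| = (Re `|v|)%:C.
Proof. by rewrite RRe_real // ger0_real. Qed.

Lemma cvgr0_Re_norm (V : normedModType C) (f : nat -> V) :
  f @ \oo --> 0 <-> (fun k => Re `|f k|) @ \oo --> 0.
Proof.
split=> /cvgr0Pnorm_lt f_cvg; apply/cvgr0Pnorm_lt => eps eps_gt0.
  have epsC_gt0 : 0 < eps%:C by rewrite ltcR.
  apply: filterS _ (f_cvg _ epsC_gt0) => k.
  by rewrite [`|f k|]normr_Re ltcR ger0_norm // Re_norm_ge0.
case: eps eps_gt0 => a b; rewrite ltcE /= => /andP[/eqP -> a_gt0].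
apply: filterS _ (f_cvg _ a_gt0) => k.
by rewrite ger0_norm ?Re_norm_ge0 // [`|f k|]normr_Re ltcR.
Qed.

Lemma cvg_affine_recursion (V : normedModType C) (l : C) (s a : nat -> V) (a_lim : V) :
  `|l| < 1 -> a @ \oo --> a_lim -> (forall k, s k.+1 = l *: s k + a k) ->
  s @ \oo --> (1 - l)^-1 *: a_lim.
Proof.
move=> l_lt1 a_cvg s_rec; set L := (1 - l)^-1 *: a_lim.
have l_neq1 : 1 - l != 0.
  by rewrite subr_eq0; apply: contraTneq l_lt1 => <-; rewrite normr1 ltxx.
have L_fix : l *: L + a_lim = L.
  have a_limE : (1 - l) *: L = a_lim by rewrite /L scalerA mulfV // scale1r.
  by rewrite -a_limE scalerBl scale1r addrC subrK.
have t_rec k : s k.+1 - L = l *: (s k - L) + (a k - a_lim).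
  by rewrite s_rec -{1}L_fix opprD addrACA scalerBr.
apply/subr_cvg0/cvgr0_Re_norm.
apply: (@cvg0_perturbed_contraction (Re `|l|) _ (fun k => Re `|a k - a_lim|)).
- exact: Re_norm_ge0.
- by move: l_lt1; rewrite ltcE => /andP[].
- by move=> k; apply: Re_norm_ge0.
- move=> k; have := ler_normD (l *: (s k - L)) (a k - a_lim).
  rewrite -t_rec normrZ [`|s k.+1 - L|]normr_Re [`|l|]normr_Re [`|s k - L|]normr_Re.
  by rewrite [`|a k - a_lim|]normr_Re -rmorphM -rmorphD lecR.
- exact/(cvgr0_Re_norm (fun k => a k - a_lim))/subr_cvg0.
Qed.

End AffineRecursion.

Section MatrixPowers.
Variable R : realType.
Local Notation C := R[i].
Local Open Scope classical_set_scope.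
Local Open Scope complex_scope.

(* index(I - G) <= 1 in the terminology of semi-convergence theory *)
Definition semisimple1 n (G : 'M[C]_n) :=
  forall y : 'cV[C]_n, (G - 1%:M) *m ((G - 1%:M) *m y) = 0 -> (G - 1%:M) *m y = 0.

Lemma mulmx_exprSr n (G : 'M[C]_n) k (y : 'cV[C]_n) : G ^+ k.+1 *m y = G ^+ k *m (G *m y).
Proof. by rewrite exprSr mulmxA. Qed.

Lemma exprmx_fixed n (G : 'M[C]_n) k (y : 'cV[C]_n) : G *m y = y -> G ^+ k *m y = y.
Proof. by move=> Gy; elim: k => [|k IH]; rewrite ?expr0 ?mul1mx // mulmx_exprSr Gy. Qed.

Lemma contraction_semisimple1 N (H G : 'M[C]_N) :
  (forall x, x != 0 -> 0 < qformR H x) -> (forall x, qformR H (G *m x) <= qformR H x) ->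
  semisimple1 G.
Proof.
move=> H_gt0 G_contr y; set z := (G - 1%:M) *m y => Gz0.
have H_ge0 x : 0 <= qformR H x.
  by have [->|/H_gt0/ltW //] := eqVneq x 0; rewrite qformR0.
have Gy : G *m y = y + z by rewrite /z mulmxBl mul1mx addrC subrK.
have Gz : G *m z = z by apply/eqP; rewrite -subr_eq0 -{2}[z]mul1mx -mulmxBl Gz0.
have Gky k : G ^+ k *m y = y + (k%:R)%:C *: z.
  elim: k => [|k IH]; first by rewrite expr0 mul1mx scale0r addr0.
  rewrite exprS -mulmxA IH mulmxDr Gy -scalemxAr Gz -addrA.
  by rewrite -natr1 rmorphD rmorph1 scalerDl scale1r [z + _]addrC.
have Gky_le k : qformR H (G ^+ k *m y) <= qformR H y.
  elim: k => [|k IH]; first by rewrite expr0 mul1mx.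
  by rewrite exprS -mulmxA; apply: le_trans (G_contr _) IH.
have bound k : k%:R ^+ 2 * qformR H z <= 4 * qformR H y.
  have := qformR_parallelogram H (G ^+ k *m y) y.
  rewrite {2}Gky [y + _]addrC addrK qformRZr; have := H_ge0 (G ^+ k *m y + y).
  by have := Gky_le k; lra.
apply/eqP; apply: contraT => z_neq0; have Hz_gt0 := H_gt0 _ z_neq0.
set b := 4 * qformR H y / qformR H z.
have b_ge0 : 0 <= b by rewrite divr_ge0 ?mulr_ge0 ?H_ge0 // ltW.
have bHz : b * qformR H z = 4 * qformR H y by rewrite divfK // gt_eqF.
set k := (Num.Def.archi_bound b).+1.
have b_lt_k : b < k%:R by rewrite (lt_le_trans (archi_boundP b_ge0)) // ler_nat.
have k_ge1 : 1 <= k%:R :> R by rewrite ler1n.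
have k_le_k2 : k%:R * qformR H z <= k%:R ^+ 2 * qformR H z by rewrite ler_pM2r //; nra.
have : b * qformR H z < k%:R * qformR H z by rewrite ltr_pM2r.
by have := bound k; lra.
Qed.

Lemma root_char_poly_eigenvector n (G : 'M[C]_n) z :
  root (char_poly G) z -> exists2 x : 'cV[C]_n, x != 0 & G *m x = z *: x.
Proof.
have -> : char_poly G = char_poly G^T.
  by rewrite /char_poly -det_tr /char_poly_mx linearB /= tr_scalar_mx map_trmx.
rewrite -eigenvalue_root_char => /eigenvalueP[v vG v0]; exists v^T.
  by apply: contra v0 => /eqP vT0; rewrite -[v]trmxK vT0 trmx0.
by rewrite -[G]trmxK -trmx_mul vG linearZ.
Qed.

Lemma semisimple1_unipotent n (G : 'M[C]_n) k (u : 'cV[C]_n) :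
  semisimple1 G -> (G - 1%:M) ^+ k *m u = 0 -> (G - 1%:M) *m u = 0.
Proof.
move=> ss1; elim: k u => [|k IH] u; first by rewrite expr0 mul1mx => ->; rewrite mulmx0.
by rewrite mulmx_exprSr => /IH /ss1.
Qed.

Lemma cvg_powers_contracting_factors n (G : 'M[C]_n) (r : seq C) y :
  (forall z, z \in r -> `|z| < 1) ->
  G *m ((\prod_(z <- r) (G - z%:M)) *m y) = (\prod_(z <- r) (G - z%:M)) *m y ->
  exists2 w : 'cV[C]_n,
    (G ^+ k *m y : 'cV[C^o]_n) @[k --> \oo] --> (w : 'cV[C^o]_n) & G *m w = w.
Proof.
elim/last_ind: r y => [|r z IH] y r_lt1.
  rewrite big_nil mul1mx => Gy; exists y => //.
  by apply: cvg_near_cst; apply: nearW => k; apply: exprmx_fixed.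
rewrite big_rcons /= -!mulmxA => Gy'.
have [|w' Gky' Gw'] := IH ((G - z%:M) *m y) _ Gy'.
  by move=> t t_r; apply: r_lt1; rewrite mem_rcons in_cons t_r orbT.
have z_lt1 : `|z| < 1 by apply: r_lt1; rewrite mem_rcons mem_head.
have rec k : G ^+ k.+1 *m y = z *: (G ^+ k *m y) + G ^+ k *m ((G - z%:M) *m y).
  by rewrite mulmx_exprSr mulmxBl mul_scalar_mx mulmxBr scalemxAr addrC subrK.
exists ((1 - z)^-1 *: w'); last by rewrite -scalemxAr Gw'.
exact: (cvg_affine_recursion (V := 'cV[C^o]_n) (s := fun k => G ^+ k *m y) z_lt1 Gky' rec).
Qed.

Lemma cvg_powers_fixed N (G : 'M[C]_N) :
  semisimple1 G ->
  (forall l (x : 'cV[C]_N), x != 0 -> G *m x = l *: x -> l != 1 -> `|l| < 1) ->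
  forall y, exists2 w : 'cV[C]_N,
    (G ^+ k *m y : 'cV[C^o]_N) @[k --> \oo] --> (w : 'cV[C^o]_N) & G *m w = w.
Proof.
case: N G => [|n] G ss1 eig_lt1 y.
  have Gy : G *m y = y by rewrite [LHS]flatmx0 [RHS]flatmx0.
  by exists y => //; apply: cvg_near_cst; apply: nearW => k; apply: exprmx_fixed.
have [r charG] := closed_field_poly_normal (char_poly G).
rewrite (monicP (char_poly_monic G)) scale1r in charG.
set s := [seq z <- r | z != 1].
have s_lt1 z : z \in s -> `|z| < 1.
  rewrite mem_filter => /andP[z1 zr].
  have [x x0 Gx] : exists2 x : 'cV[C]_n.+1, x != 0 & G *m x = z *: x.
    by apply: root_char_poly_eigenvector; rewrite charG root_prod_XsubC.
  exact: eig_lt1 x0 Gx z1.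
have horner_XsubC z : horner_mx G ('X - z%:P) = G - z%:M.
  by rewrite rmorphB /= horner_mx_X horner_mx_C.
have charE : char_poly G = ('X - 1) ^+ count (pred1 1) r * \prod_(z <- s) ('X - z%:P).
  rewrite charG (bigID (pred1 1)) /= big_filter; congr (_ * _).
  by rewrite (eq_bigr (fun=> 'X - 1)) => [|z /eqP->] //; rewrite big_const_seq iter_mulr_1.
set u := \prod_(z <- s) (G - z%:M) *m y.
have Gu : (G - 1%:M) *m u = 0.
  apply: (semisimple1_unipotent (k := count (pred1 1) r) ss1).
  have := Cayley_Hamilton G; rewrite charE rmorphM rmorphXn rmorph_prod /= horner_XsubC.
  rewrite (eq_bigr _ (fun z _ => horner_XsubC z)) /u mulmxA => CH.
  have -> : (G - 1%:M) ^+ count (pred1 1) r *m \prod_(z <- s) (G - z%:M) = 0 := CH.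
  by rewrite mul0mx.
apply: (cvg_powers_contracting_factors s_lt1).
by rewrite -/u; apply/eqP; rewrite -subr_eq0 -{2}[u]mul1mx -mulmxBl Gu.
Qed.

Lemma iterate_affine N (G : 'M[C]_N) (c u0 us : 'cV[C]_N) k :
  G *m us + c = us -> iterate G c u0 k = us + G ^+ k *m (u0 - us).
Proof.
move=> Gus; elim: k => [|k IH]; first by rewrite expr0 mul1mx addrC subrK.
by rewrite [LHS]/= -/(iterate G c u0 k) IH mulmxDr addrAC Gus exprS mulmxA.
Qed.

Lemma semi_convergent_affine N (G A : 'M[C]_N) (c b us : 'cV[C]_N) :
  A *m us = b -> G *m us + c = us -> (forall w : 'cV[C]_N, G *m w = w -> A *m w = 0) ->
  (forall y, exists2 w : 'cV[C]_N,
    (G ^+ k *m y : 'cV[C^o]_N) @[k --> \oo] --> (w : 'cV[C^o]_N) & G *m w = w) ->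
  semi_convergent G c A b.
Proof.
move=> Aus Gus fixed_null cvg_powers u0; have [w Gkw Gw] := cvg_powers (u0 - us).
exists (us + w); last by rewrite mulmxDr Aus fixed_null // addr0.
rewrite (eq_cvg _ _ (fun k => iterate_affine u0 k Gus)).
exact: (@cvgD _ 'cV[C^o]_N _ _ _ (fun=> us) _ _ _ (cvg_cst _) Gkw).
Qed.

End MatrixPowers.

Section PSSIteration.
Variable R : realType.
Local Notation C := R[i].

Variables (N : nat) (Sg P S : 'M[C]_N).

Definition pss_mx := invmx (Sg + S) *m (Sg - P) *m invmx (Sg + P) *m (Sg - S).
Definition pss_half (x : 'cV[C]_N) := invmx (Sg + P) *m ((Sg - S) *m x).
Definition pss_energy_mx := ctr (Sg + S) *m invmx Sg *m (Sg + S).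

Hypotheses (hSg : hpd Sg) (hP : possemidef P) (hS : skew_hermitian S).

Let Sg_unit := hpd_unitmx hSg.
Let SgS_unit := hpd_add_unitmx hSg (skew_possemidef hS).
Let SgNS_unit := hpd_add_unitmx hSg (skew_possemidef (skew_hermitianN hS)).
Let SgP_unit := hpd_add_unitmx hSg hP.

Lemma pss_halfP x : (Sg + P) *m pss_half x = (Sg - S) *m x.
Proof. exact: mulKVmx. Qed.

Lemma pss_mxP x : (Sg + S) *m (pss_mx *m x) = (Sg - P) *m pss_half x.
Proof. by rewrite /pss_mx /pss_half -!mulmxA mulKVmx. Qed.

Lemma pss_half_neq0 x : x != 0 -> pss_half x != 0.
Proof.
apply: contra => /eqP v0; have := pss_halfP x; rewrite v0 mulmx0 => /esym SgSx0.
by rewrite -(mulKmx SgNS_unit x) SgSx0 mulmx0.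
Qed.

Lemma qformR_invmx_add K y :
  qformR (invmx Sg) ((Sg + K) *m y) = qformR (invmx Sg) ((Sg - K) *m y) + 4 * qformR K y.
Proof.
have expand L : ctr (Sg + L) *m invmx Sg *m (Sg + L) =
    Sg + L + ctr L + ctr L *m invmx Sg *m L.
  rewrite ctrD hSg.1 !mulmxDl !mulmxDr (mulmxV Sg_unit) !mul1mx (mulmxKV Sg_unit).
  by rewrite !addrA.
rewrite -!qformR_mulmx !expand ctrN !mulNmx !mulmxN opprK !qformRD !qformRN qformR_ctr.
lra.
Qed.

Lemma pss_energy_gt0 x : x != 0 -> 0 < qformR pss_energy_mx x.
Proof.
move=> x0; rewrite qformR_mulmx; apply: hpd_qformR_gt0 (hpd_invmx hSg) _.
by apply: contra x0 => /eqP SgSx0; rewrite -(mulKmx SgS_unit x) SgSx0 mulmx0.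
Qed.

Lemma pss_energy_dissipation x :
  qformR pss_energy_mx (pss_mx *m x) = qformR pss_energy_mx x - 4 * qformR P (pss_half x).
Proof.
rewrite !qformR_mulmx pss_mxP.
have := qformR_invmx_add P (pss_half x); rewrite pss_halfP.
by have := qformR_invmx_add S x; rewrite (qformR_skew x hS); lra.
Qed.

Lemma pss_semisimple1 : semisimple1 pss_mx.
Proof.
apply: contraction_semisimple1 => [|x]; first exact: pss_energy_gt0.
by rewrite pss_energy_dissipation; have := possemidef_qformR_ge0 (pss_half x) hP; lra.
Qed.

Lemma pss_eigen_lt1 l x :
  x != 0 -> pss_mx *m x = l *: x -> 0 < qformR P (pss_half x) -> `|l| < 1.
Proof.
move=> x0 Gx Pv_gt0; have := pss_energy_dissipation x; rewrite Gx qformRZ.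
have := pss_energy_gt0 x0 => E_gt0 dissip.
have l2_lt1 : Re l ^+ 2 + Im l ^+ 2 < 1 by nra.
rewrite -(expr_lt1 (n := 2)) // -add_Re2_Im2 -(rmorph1 (real_complex R)).
by rewrite (@ltcR R).
Qed.

Lemma pss_residual (x : 'cV[C]_N) :
  x - pss_mx *m x = 2%:R *: (invmx (Sg + S) *m Sg *m invmx (Sg + P) *m ((P + S) *m x)).
Proof.
set v := pss_half x; have SgPv := pss_halfP x; have SgSGx := pss_mxP x.
have xv : x - v = invmx (Sg + P) *m ((P + S) *m x).
  rewrite -[LHS](mulKmx SgP_unit) mulmxBr SgPv; congr (_ *m _).
  by apply/matrixP=> i j; rewrite !(mulmxBl, mulmxDl) !mxE; ring.
rewrite -[LHS](mulKmx SgS_unit) mulmxBr SgSGx -!mulmxA -xv scalemxAr.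
congr (_ *m _); move: SgPv; rewrite -/v mulmxBr !(mulmxBl, mulmxDl) => SgPv.
apply/eqP; rewrite -subr_eq0; apply/eqP.
have -> : Sg *m x + S *m x - (Sg *m v - P *m v) - 2%:R *: (Sg *m x - Sg *m v) =
    (Sg *m v + P *m v) - (Sg *m x - S *m x).
  by apply/matrixP=> i j; rewrite !mxE; ring.
by rewrite SgPv subrr.
Qed.

Lemma pss_fixed_kernel (w : 'cV[C]_N) : pss_mx *m w = w -> (P + S) *m w = 0.
Proof.
move=> Gw; have := pss_residual w; rewrite Gw subrr => /esym/eqP.
rewrite scaler_eq0 pnatr_eq0 /= -!mulmxA => /eqP.
move=> /(congr1 (mulmx (Sg + S))); rewrite mulmx0 (mulKVmx SgS_unit).
move=> /(congr1 (mulmx (invmx Sg))); rewrite mulmx0 (mulKmx Sg_unit).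
by move=> /(congr1 (mulmx (Sg + P))); rewrite mulmx0 (mulKVmx SgP_unit).
Qed.

Lemma pss_eigen_relation l (x w : 'cV[C]_N) :
  pss_mx *m x = l *: x -> Sg *m w = P *m pss_half x ->
  (1 + l) *: ((P + S) *m pss_half x) = (1 - l) *: (Sg *m pss_half x + S *m w).
Proof.
move=> Gx Sgw; set v := pss_half x.
have e1 : Sg *m v + P *m v = Sg *m x - S *m x by rewrite -mulmxDl -mulmxBl pss_halfP.
have e2 : Sg *m v - P *m v = l *: (Sg *m x + S *m x).
  by rewrite -mulmxBl -pss_mxP Gx -scalemxAr mulmxDl.
have twice_lx : (1 + l) *: v + (l - 1) *: w = (2%:R * l) *: x.
  rewrite -[LHS](mulKmx Sg_unit) -[RHS](mulKmx Sg_unit); congr (_ *m _).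
  rewrite mulmxDr -!scalemxAr Sgw.
  have -> : (1 + l) *: (Sg *m v) + (l - 1) *: (P *m v) =
      l *: (Sg *m v + P *m v) + (Sg *m v - P *m v).
    by apply/matrixP=> i j; rewrite !mxE; ring.
  by rewrite e1 e2; apply/matrixP=> i j; rewrite !mxE; ring.
have twice_lSx : (1 + l) *: (S *m v) + (l - 1) *: (S *m w) = (2%:R * l) *: (S *m x).
  by move: (congr1 (mulmx S) twice_lx); rewrite mulmxDr -!scalemxAr.
apply/eqP; rewrite -subr_eq0; apply/eqP.
have -> : (1 + l) *: ((P + S) *m v) - (1 - l) *: (Sg *m v + S *m w) =
    l *: (Sg *m v + P *m v) - (Sg *m v - P *m v)
    + ((1 + l) *: (S *m v) + (l - 1) *: (S *m w)).
  by apply/matrixP=> i j; rewrite mulmxDl !mxE; ring.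
by rewrite e1 e2 twice_lSx; apply/matrixP=> i j; rewrite !mxE; ring.
Qed.

End PSSIteration.

Section EPSS.
Variable R : realType.
Local Notation C := R[i].
Local Open Scope complex_scope.

Lemma epss_condition n m (C0 CS Pb : 'M[C]_m) (BP BS : 'M[C]_(m, n)) (Pa : 'M[C]_n) :
  hpd Pa -> hpd Pb ->
  ((forall r, r != 0 -> in_null (C0 + ctr C0) r ->
       qform (Pb + CS *m invmx Pb *m ctr CS) r != qform (BS *m invmx Pa *m ctr BP) r)
   \/ (forall r, r != 0 -> in_null (C0 + ctr C0) r ->
       qform (BS *m invmx Pa *m ctr BP) r <= 0)
   \/ (forall r, in_null (C0 + ctr C0) r -> in_null (ctr BS) r \/ in_null (ctr BP) r)
   \/ (posdef C0 \/ BS = 0 \/ BP = 0)) ->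
  forall r, r != 0 -> in_null (C0 + ctr C0) r ->
    qform (Pb + CS *m invmx Pb *m ctr CS) r != qform (BS *m invmx Pa *m ctr BP) r.
Proof.
move=> hPa hPb conds r r0 Nr.
have lhs_gt0 : 0 < qformR (Pb + CS *m invmx Pb *m ctr CS) r.
  rewrite qformRD -{1}[CS]ctrK qformR_mulmx.
  have := hpd_qformR_gt0 hPb r0; have := hpsd_qformR_ge0 (ctr CS *m r) (hpd_hpsd (hpd_invmx hPb)).
  lra.
have rhs0 : qform (BS *m invmx Pa *m ctr BP) r = 0 ->
    qform (Pb + CS *m invmx Pb *m ctr CS) r != qform (BS *m invmx Pa *m ctr BP) r.
  by move=> ->; apply: contraTneq lhs_gt0 => lhs0; rewrite /qformR lhs0 ltxx.
case: conds => [cond1|[cond2|[cond3|[posC|[BS0|BP0]]]]].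
- exact: cond1.
- apply: contraTneq (cond2 r r0 Nr) => <-.
  by apply/negP; rewrite lecE => /andP[_] /=; rewrite -/(qformR _ r); lra.
- apply: rhs0; case: (cond3 r Nr) => [BSr|BPr].
    have BSr' : ctr r *m BS = 0 by rewrite -[LHS]ctrK ctrM ctrK BSr ctr0.
    by rewrite /qform !mulmxA BSr' !mul0mx mxE.
  by rewrite /qform -!mulmxA BPr !mulmx0 mxE.
- exfalso; have := hpd_qformR_gt0 posC r0.
  by rewrite /qformR /qform -mulmxA Nr mulmx0 mxE ltxx.
- by apply: rhs0; rewrite BS0 !mul0mx /qform mulmx0 mul0mx mxE.
- by apply: rhs0; rewrite BP0 ctr0 mulmx0 /qform mulmx0 mul0mx mxE.
Qed.

Section EPSSSpectrum.
Variables (n m : nat) (Pa AP AS : 'M[C]_n) (Pb CP CS C0 : 'M[C]_m) (BP BS : 'M[C]_(m, n)).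
Hypotheses (hPa : hpd Pa) (hPb : hpd Pb) (hAP : posdef AP) (hAS : skew_hermitian AS)
  (hCP : possemidef CP) (hCS : skew_hermitian CS) (defC0 : C0 = CP + CS)
  (C0_null : forall r, in_null (C0 + ctr C0) r -> in_null C0 r).

Let Sg := block_mx Pa 0 0 Pb.
Let Pc := block_mx AP (ctr BP) (- BP) CP.
Let Sc := block_mx AS (ctr BS) (- BS) CS.

Lemma epss_dissipation_eq0 v :
  qformR Pc v = 0 -> usubmx v = 0 /\ (C0 + ctr C0) *m dsubmx v = 0.
Proof.
rewrite -[v]vsubmxK qformR_saddle col_mxKu col_mxKd => Pv0.
have CP_ge0 := possemidef_qformR_ge0 (dsubmx v) hCP.
have [v1_0|v1_neq0] := eqVneq (usubmx v) 0; last first.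
  by exfalso; have := posdef_qformR_gt0 hAP v1_neq0; lra.
split=> //; have -> : C0 + ctr C0 = CP + ctr CP.
  by rewrite defC0 ctrD hCS addrACA subrr addr0.
apply: hermitian_psd_kernel hCP.1 (fun y => hpsd_qformR_ge0 y hCP) _.
by rewrite qformRD qformR_ctr; move: Pv0; rewrite v1_0 qformR0; lra.
Qed.

Lemma epss_undamped_eigenvector l x :
  x != 0 -> pss_mx Sg Pc Sc *m x = l *: x -> l != 1 ->
  qformR Pc (pss_half Sg Pc Sc x) = 0 ->
  exists r, [/\ r != 0, in_null (C0 + ctr C0) r &
    qform (Pb + CS *m invmx Pb *m ctr CS) r = qform (BS *m invmx Pa *m ctr BP) r].
Proof.
move=> x0 Gx l_neq1 Pv0.
have hSg : hpd Sg := hpd_block_diag hPa hPb.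
have hPc : possemidef Pc := possemidef_saddle BP hAP hCP.
have hSc : skew_hermitian Sc := skew_hermitian_saddle BS hAS hCS.
have v_neq0 := pss_half_neq0 hSg hPc hSc x0.
move: v_neq0 Pv0; set v := pss_half Sg Pc Sc x => v_neq0 Pv0.
have [v1_0 Nr] := epss_dissipation_eq0 Pv0; set r := dsubmx v in Nr.
have vE : v = col_mx 0 r by rewrite -v1_0 vsubmxK.
have CPr : CP *m r = ctr CS *m r.
  by apply/eqP; rewrite hCS mulNmx -addr_eq0 -mulmxDl -defC0 C0_null.
set w := col_mx (invmx Pa *m (ctr BP *m r)) (invmx Pb *m (CP *m r)).
have Sgw : Sg *m w = Pc *m v.
  rewrite vE /Sg /Pc !mul_block_col !mulmx0 !mul0mx !addr0 !add0r.
  by rewrite (mulKVmx (hpd_unitmx hPa)) (mulKVmx (hpd_unitmx hPb)).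
(* In the bottom block row [(Pc + Sc) v] is [C0 r = 0]. *)
have := pss_eigen_relation hSg hPc hSc Gx Sgw; rewrite -/v => /(congr1 dsubmx).
rewrite vE /Pc /Sc /Sg add_block_mx !mul_block_col add_col_mx !scale_col_mx !col_mxKd.
rewrite !mulmx0 !add0r -defC0 C0_null // scaler0 => /esym/eqP.
rewrite scaler_eq0 subr_eq0 eq_sym (negbTE l_neq1) /= => /eqP bottom0.
exists r; split=> //; first by apply: contra v_neq0 => /eqP r0; rewrite vE r0 col_mx0.
have key : (Pb + CS *m invmx Pb *m ctr CS) *m r = BS *m invmx Pa *m ctr BP *m r.
  apply/eqP; rewrite -subr_eq0 -{}bottom0 CPr mulmxDl mulNmx -!mulmxA; apply/eqP.
  by apply/matrixP=> i j; rewrite !mxE; ring.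
by rewrite /qform -(mulmxA (ctr r)) key mulmxA.
Qed.

End EPSSSpectrum.
End EPSS.

Theorem corollary1 (R : realType) (n m : nat)
  (A : 'M[R[i]]_n) (C : 'M[R[i]]_m) (B : 'M[R[i]]_(m, n))
  (AP AS : 'M[R[i]]_n) (CP CS : 'M[R[i]]_m) (BP BS : 'M[R[i]]_(m, n))
  (Pa : 'M[R[i]]_n) (Pb : 'M[R[i]]_m) (b : 'cV[R[i]]_(n + m)) :
  posdef A -> possemidef C -> (m <= n)%N ->
  (* the saddle point matrix is singular, and the system is consistent *)
  \det (block_mx A (ctr B) (- B) C) = 0 ->
  (exists u, block_mx A (ctr B) (- B) C *m u = b) ->
  (* splittings *)
  A = AP + AS -> posdef AP -> skew_hermitian AS ->
  C = CP + CS -> possemidef CP -> skew_hermitian CS ->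
  B = BP + BS ->
  hpd Pa -> hpd Pb ->
  (forall r, in_null (C + ctr C) r -> in_null C r) ->
  ((forall r, r != 0 -> in_null (C + ctr C) r ->
       qform (Pb + CS *m invmx Pb *m ctr CS) r
         != qform (BS *m invmx Pa *m ctr BP) r)
   \/ (forall r, r != 0 -> in_null (C + ctr C) r ->
       qform (BS *m invmx Pa *m ctr BP) r <= 0)
   \/ (forall r, in_null (C + ctr C) r -> in_null (ctr BS) r \/ in_null (ctr BP) r)
   \/ (posdef C \/ BS = 0 \/ BP = 0)) ->
  let Pcal := block_mx AP (ctr BP) (- BP) CP in
  let Scal := block_mx AS (ctr BS) (- BS) CS in
  let Sigma := block_mx Pa 0 0 Pb in
  let Gamma := invmx (Sigma + Scal) *m (Sigma - Pcal)
                 *m invmx (Sigma + Pcal) *m (Sigma - Scal) in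
  let c := 2%:R *: (invmx (Sigma + Scal) *m Sigma *m invmx (Sigma + Pcal) *m b) in
  semi_convergent Gamma c (block_mx A (ctr B) (- B) C) b.

Proof.
move=> _ _ _ _ [us Aus] defA hAP hAS defC hCP hCS defB hPa hPb C_null conds
  Pcal Scal Sigma Gamma c.
have hSg : hpd Sigma := hpd_block_diag hPa hPb.
have hPc : possemidef Pcal := possemidef_saddle BP hAP hCP.
have hSc : skew_hermitian Scal := skew_hermitian_saddle BS hAS hCS.
have cond1 := epss_condition hPa hPb conds.
have Acal : block_mx A (ctr B) (- B) C = Pcal + Scal.
  by rewrite add_block_mx defA defB defC ctrD opprD.
rewrite Acal in Aus *; apply: (semi_convergent_affine Aus).
- by rewrite /c /Gamma -Aus -pss_residual // addrC subrK.
- by move=> w; apply: pss_fixed_kernel.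
apply: cvg_powers_fixed; first exact: pss_semisimple1.
move=> l x x0 Gx l_neq1.
have Pv_gt0 : 0 < qformR Pcal (pss_half Sigma Pcal Scal x).
  rewrite lt_def possemidef_qformR_ge0 // andbT; apply/eqP => Pv0.
  have [r [r0 Nr]] := epss_undamped_eigenvector hPa hPb hAP hAS hCP hCS defC C_null
    x0 Gx l_neq1 Pv0.
  by apply/eqP; apply: cond1.
exact: pss_eigen_lt1 x0 Gx Pv_gt0.
Qed.
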